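(* Let $n\ge2$ and $T\subset\mathbb{N}$. If $\mathcal{P}_T$ is a PULB-space for dimension $n$, then the quadrature rule in condition (i) of the definition of PULB-space is unique; i.e., any two quadrature rules with nodes in $[-1,1]$ and positive weights that are exact on $\mathcal{P}_T$ and satisfy condition (ii) have the same nodes and the same weights.
   Context: $d\mu_n(t)=\gamma_n(1-t^2)^{(n-3)/2}dt$ is the probability measure on $[-1,1]$ with this density; $P_i^{(n)}$ is the Gegenbauer polynomial of degree $i$ (Jacobi with $\alpha=\beta=(n-3)/2$, normalized $P_i^{(n)}(1)=1$). $\mathcal{P}_T=\mathrm{span}\{P_i^{(n)}:i\in T\cup\{0\}\}$. A function $h:[-1,1]\to[0,+\infty]$, continuous on $[-1,1]$ and finite on $[-1,1)$, is absolutely monotone if $h^{(j)}(t)\ge0$ for all $j\ge0$, $t\in[-1,1)$. $\mathcal{L}(n,T,h)=\{f\in\mathcal{P}_T: f\le h\text{ on }[-1,1]\}$. A quadrature rule exact on $\mathcal{P}_T$ consists of nodes $\{\alpha_i\}\subset[-1,1]$ and weights $\{\rho_i\}\subset(0,1)$ with $\int_{-1}^1f\,d\mu_n=\sum_i\rho_if(\alpha_i)$ for all $f\in\mathcal{P}_T$. $\mathcal{P}_T$ is a PULB-space for dimension $n$ if (i) there is a quadrature rule with positive weights exact on $\mathcal{P}_T$ and (ii) for every absolutely monotone $h$ some $f\in\mathcal{L}(n,T,h)$ agrees with $h$ at the nodes of that rule. *)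

From Stdlib Require Import Reals List Permutation.
From Coquelicot Require Import Coquelicot.
Open Scope R_scope.

(** Gegenbauer polynomials P_i^{(n)}, normalized by P_i^{(n)}(1) = 1, given by
    the standard three-term recurrence
    P_0 = 1, P_1 = t,
    (i+n-2) P_{i+1}(t) = (2i+n-2) t P_i(t) - i P_{i-1}(t)   (i >= 1). *)
Fixpoint geg_pair (n : nat) (i : nat) (t : R) : R * R :=
  (* returns (P_i(t), P_{i+1}(t)) *)
  match i with
  | O => (1, t)
  | S k =>
      let (p, q) := geg_pair n k t in
      (q, ((2 * INR (S k) + INR n - 2) * t * q - INR (S k) * p)
            / (INR (S k) + INR n - 2))
  end.

Definition gegenbauer (n i : nat) (t : R) : R := fst (geg_pair n i t).

Definition weight (n : nat) (t : R) : R :=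
  Rpower (1 - t ^ 2) ((INR n - 3) / 2).

Definition gamma_n (n : nat) : R :=
  / RInt_gen (weight n) (at_right (-1)) (at_left 1).

Definition mu_integral (n : nat) (f : R -> R) : R :=
  gamma_n n * RInt_gen (fun t => f t * weight n t) (at_right (-1)) (at_left 1).

Definition in_PT (n : nat) (T : nat -> Prop) (f : R -> R) : Prop :=
  exists (N : nat) (c : nat -> R),
    (forall i, c i <> 0 -> i = 0%nat \/ T i) /\
    (forall t, f t = sum_f_R0 (fun i => c i * gegenbauer n i t) N).

Definition qsum (q : list (R * R)) (f : R -> R) : R :=
  fold_right (fun p acc => snd p * f (fst p) + acc) 0 q.

Definition quadrature_rule (n : nat) (T : nat -> Prop) (q : list (R * R)) : Prop :=
  NoDup (map fst q) /\
  (forall p, In p q -> -1 <= fst p <= 1 /\ 0 < snd p < 1) /\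
  (forall f, in_PT n T f -> mu_integral n f = qsum q f).

Definition deriv_on_I (f g : R -> R) : Prop :=
  forall t, -1 <= t < 1 ->
    filterlim (fun s => (f s - f t) / (s - t))
      (within (fun s => -1 <= s < 1 /\ s <> t) (locally t))
      (locally (g t)).

Definition abs_monotone (h : R -> Rbar) : Prop :=
  (forall t, -1 <= t <= 1 -> Rbar_le (Finite 0) (h t)) /\
  (forall t, -1 <= t < 1 -> is_finite (h t)) /\
  (forall t, -1 <= t < 1 ->
     filterlim (fun s => real (h s))
       (within (fun s => -1 <= s <= 1) (locally t)) (locally (real (h t)))) /\
  filterlim (fun s => real (h s)) (at_left 1) (Rbar_locally (h 1)) /\
  exists g : nat -> R -> R,
    (forall t, -1 <= t < 1 -> g 0%nat t = real (h t)) /\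
    (forall j, deriv_on_I (g j) (g (S j))) /\
    (forall j t, -1 <= t < 1 -> 0 <= g j t).

Definition in_L (n : nat) (T : nat -> Prop) (h : R -> Rbar) (f : R -> R) : Prop :=
  in_PT n T f /\ (forall t, -1 <= t <= 1 -> Rbar_le (Finite (f t)) (h t)).

Definition interpolation_cond (n : nat) (T : nat -> Prop) (q : list (R * R)) : Prop :=
  forall h, abs_monotone h ->
    exists f, in_L n T h f /\ (forall p, In p q -> Finite (f (fst p)) = h (fst p)).

Definition PULB_rule (n : nat) (T : nat -> Prop) (q : list (R * R)) : Prop :=
  quadrature_rule n T q /\ interpolation_cond n T q.

Definition PULB_space (n : nat) (T : nat -> Prop) : Prop :=
  exists q, PULB_rule n T q.

(** If q1 and q2 both satisfy (i) and (ii), then for every absolutely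
    monotone h the interpolant f of h at the nodes of q1 gives
      sum_q1 h = sum_q1 f = int f dmu = sum_q2 f <= sum_q2 h,
    and symmetrically, so the two discrete measures agree on all absolutely
    monotone functions, in particular on every power (1+t)^k.  Two finite
    measures with the same moments coincide: testing against the polynomial
    vanishing at all nodes but one isolates the mass at that node.  With
    distinct nodes and positive weights, the two rules are then the same
    list up to order. *)

From Stdlib Require Import Reals List Permutation Lra Lia.
From Coquelicot Require Import Coquelicot.
Open Scope R_scope.

Lemma qsum_ext (q : list (R * R)) (f g : R -> R) :
  (forall p, In p q -> f (fst p) = g (fst p)) -> qsum q f = qsum q g.
Proof.
  induction q as [|a q IH]; intros Hfg; simpl; [reflexivity|].
  rewrite (Hfg a (or_introl eq_refl)), IH; [reflexivity|].
  intros p Hp; apply Hfg; right; exact Hp.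
Qed.

Lemma qsum_le (q : list (R * R)) (f g : R -> R) :
  (forall p, In p q -> 0 <= snd p /\ f (fst p) <= g (fst p)) ->
  qsum q f <= qsum q g.
Proof.
  induction q as [|a q IH]; intros Hfg; simpl; [lra|].
  destruct (Hfg a (or_introl eq_refl)) as [Ha Hfga].
  apply Rplus_le_compat.
  - apply Rmult_le_compat_l; assumption.
  - apply IH; intros p Hp; apply Hfg; right; exact Hp.
Qed.

Lemma qsum_minus_scal (q : list (R * R)) (f g : R -> R) (c : R) :
  qsum q (fun t => f t - c * g t) = qsum q f - c * qsum q g.
Proof. induction q as [|a q IH]; simpl; [ring|]. rewrite IH; ring. Qed.

Lemma derivable_pt_lim_within (f : R -> R) (t l : R) (D : R -> Prop) :
  derivable_pt_lim f t l ->
  filterlim (fun s => (f s - f t) / (s - t))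
    (within (fun s => D s /\ s <> t) (locally t)) (locally l).
Proof.
  intros Hf. apply filterlim_locally. intros eps.
  destruct (Hf eps (cond_pos eps)) as [delta Hdelta].
  exists delta. intros s Hs [_ Hst]. change R in s.
  change (Rabs ((f s - f t) / (s - t) - l) < eps).
  change (Rabs (s - t) < delta) in Hs.
  assert (Hst' : s - t <> 0) by lra.
  specialize (Hdelta (s - t) Hst' Hs).
  replace (t + (s - t)) with s in Hdelta by ring. exact Hdelta.
Qed.

Fixpoint falling (k j : nat) : nat :=
  match j with O => 1%nat | S j' => (falling k j' * (k - j'))%nat end.

Lemma shifted_pow_continuous (k : nat) (t : R) :
  filterlim (fun s => (1 + s) ^ k) (locally t) (locally ((1 + t) ^ k)).
Proof.
  apply (ex_derive_continuous (fun s => (1 + s) ^ k)). auto_derive. exact I.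
Qed.

(* The j-th derivative of (1+t)^k is falling k j * (1+t)^(k-j); truncated
   subtraction is harmless since falling k j = 0 once j > k. *)
Lemma shifted_pow_abs_monotone (k : nat) :
  abs_monotone (fun t => Finite ((1 + t) ^ k)).
Proof.
  split; [|split; [|split; [|split]]].
  - intros t Ht. simpl. apply pow_le. lra.
  - intros t _. reflexivity.
  - intros t _. eapply filterlim_filter_le_1; [apply filter_le_within|].
    apply shifted_pow_continuous.
  - eapply filterlim_filter_le_1; [apply filter_le_within|].
    apply shifted_pow_continuous.
  - exists (fun j t => INR (falling k j) * (1 + t) ^ (k - j)).
    split; [|split].
    + intros t _. simpl. rewrite Nat.sub_0_r. ring.
    + intros j t _.
      apply (derivable_pt_lim_within
               (fun s => INR (falling k j) * (1 + s) ^ (k - j))).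
      apply is_derive_Reals.
      auto_derive; [exact I|]. simpl falling. rewrite mult_INR.
      destruct (k - j)%nat as [|m] eqn:Hkj.
      * simpl. ring.
      * replace (k - S j)%nat with m by lia. simpl pred. ring.
    + intros j t Ht. apply Rmult_le_pos; [apply pos_INR|]. apply pow_le. lra.
Qed.

Lemma qsum_le_of_interpolation (n : nat) (T : nat -> Prop)
    (q1 q2 : list (R * R)) (h : R -> R) :
  PULB_rule n T q1 -> quadrature_rule n T q2 ->
  abs_monotone (fun t => Finite (h t)) ->
  qsum q1 h <= qsum q2 h.
Proof.
  intros [[_ [_ Hexact1]] Hinterp] [_ [Hrule2 Hexact2]] Hh.
  destruct (Hinterp _ Hh) as [f [[HfPT Hfh] Hnodes]].
  rewrite (qsum_ext q1 h f).
  2: { intros p Hp. specialize (Hnodes p Hp). injection Hnodes. auto. }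
  rewrite <- (Hexact1 f HfPT), (Hexact2 f HfPT). apply qsum_le.
  intros p Hp. destruct (Hrule2 p Hp) as [Hnode Hweight].
  split; [lra|]. exact (Hfh (fst p) Hnode).
Qed.

Definition node_weight (q : list (R * R)) (z : R) : R :=
  qsum q (fun t => if Req_EM_T t z then 1 else 0).

Lemma qsum_single_node (q : list (R * R)) (f : R -> R) (z : R) :
  (forall p, In p q -> fst p <> z -> f (fst p) = 0) ->
  qsum q f = node_weight q z * f z.
Proof.
  unfold node_weight. induction q as [|a q IH]; intros Hf; simpl; [ring|].
  rewrite IH by (intros p Hp; apply Hf; right; exact Hp).
  destruct (Req_EM_T (fst a) z) as [Ha|Ha].
  - rewrite Ha. ring.
  - rewrite (Hf a (or_introl eq_refl) Ha). ring.
Qed.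

Lemma node_weight_notin (q : list (R * R)) (z : R) :
  ~ In z (map fst q) -> node_weight q z = 0.
Proof.
  intros Hz. unfold node_weight.
  rewrite (qsum_ext q _ (fun _ => 0)).
  - rewrite (qsum_single_node q (fun _ => 0) z); [ring|reflexivity].
  - intros p Hp. destruct (Req_EM_T (fst p) z) as [Hpz|]; [|reflexivity].
    exfalso. apply Hz. rewrite <- Hpz. apply in_map, Hp.
Qed.

Lemma node_weight_in (q : list (R * R)) (z w : R) :
  NoDup (map fst q) -> In (z, w) q -> node_weight q z = w.
Proof.
  induction q as [|a q IH]; simpl; intros Hnodup Hin; [contradiction|].
  inversion Hnodup as [|? ? Ha Hnodup']; subst.
  unfold node_weight at 1; simpl; fold (node_weight q z).
  destruct Hin as [->|Hin].
  - simpl. destruct (Req_EM_T z z); [|congruence].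
    rewrite (node_weight_notin q z Ha). ring.
  - destruct (Req_EM_T (fst a) z) as [Haz|].
    + exfalso. apply Ha. rewrite Haz. exact (in_map fst _ _ Hin).
    + rewrite IH by assumption. ring.
Qed.

Lemma In_of_node_weight_eq (q1 q2 : list (R * R)) :
  NoDup (map fst q1) -> NoDup (map fst q2) ->
  (forall p, In p q1 -> 0 < snd p) ->
  (forall z, node_weight q1 z = node_weight q2 z) ->
  forall p, In p q1 -> In p q2.
Proof.
  intros Hnodup1 Hnodup2 Hpos1 Hweights [z w] Hin.
  pose proof (node_weight_in _ _ _ Hnodup1 Hin) as Hw. rewrite Hweights in Hw.
  destruct (in_dec Req_EM_T z (map fst q2)) as [Hz|Hz].
  - apply in_map_iff in Hz. destruct Hz as [[z' w'] [Hz' Hin']].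
    simpl in Hz'; subst z'.
    rewrite (node_weight_in _ _ _ Hnodup2 Hin') in Hw. subst. exact Hin'.
  - rewrite node_weight_notin in Hw by exact Hz.
    specialize (Hpos1 _ Hin). simpl in Hpos1. lra.
Qed.

Lemma Permutation_of_node_weight_eq (q1 q2 : list (R * R)) :
  NoDup (map fst q1) -> NoDup (map fst q2) ->
  (forall p, In p q1 -> 0 < snd p) -> (forall p, In p q2 -> 0 < snd p) ->
  (forall z, node_weight q1 z = node_weight q2 z) ->
  Permutation q1 q2.
Proof.
  intros Hnodup1 Hnodup2 Hpos1 Hpos2 Hweights.
  apply NoDup_Permutation; [eapply NoDup_map_inv; eassumption..|].
  intros p; split; apply In_of_node_weight_eq; auto.
Qed.

Fixpoint root_poly (l : list R) (t : R) : R :=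
  match l with nil => 1 | z :: l' => (t - z) * root_poly l' t end.

Lemma root_poly_eq0 (l : list R) (t : R) : In t l -> root_poly l t = 0.
Proof.
  induction l as [|z l IH]; simpl; [tauto|].
  intros [->|Ht]; [ring|]. rewrite IH by exact Ht. ring.
Qed.

Lemma root_poly_neq0 (l : list R) (t : R) : ~ In t l -> root_poly l t <> 0.
Proof.
  induction l as [|z l IH]; simpl; intros Ht; [lra|].
  apply Rmult_integral_contrapositive. split.
  - intros Htz. apply Ht. left. lra.
  - apply IH. intros Htl. apply Ht. right. exact Htl.
Qed.

Section EqualMoments.

Variables q1 q2 : list (R * R).

(* Moments are taken in (1+t)^k rather than t^k because only the former are
   absolutely monotone on [-1,1]. *)
Hypothesis moments_eq :
  forall k, qsum q1 (fun t => (1 + t) ^ k) = qsum q2 (fun t => (1 + t) ^ k).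

Lemma qsum_shifted_pow_root_poly_eq (l : list R) (k : nat) :
  qsum q1 (fun t => (1 + t) ^ k * root_poly l t) =
  qsum q2 (fun t => (1 + t) ^ k * root_poly l t).
Proof.
  revert k. induction l as [|z l IH]; intros k; simpl.
  - rewrite (qsum_ext q1 _ (fun t => (1 + t) ^ k)) by (intros; ring).
    rewrite (qsum_ext q2 _ (fun t => (1 + t) ^ k)) by (intros; ring).
    apply moments_eq.
  - assert (Hsplit : forall q,
      qsum q (fun t => (1 + t) ^ k * ((t - z) * root_poly l t)) =
      qsum q (fun t => (1 + t) ^ S k * root_poly l t)
        - (1 + z) * qsum q (fun t => (1 + t) ^ k * root_poly l t)).
    { intros q. rewrite <- qsum_minus_scal. apply qsum_ext. intros; simpl; ring. }
    rewrite !Hsplit, !IH. reflexivity.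
Qed.

Lemma node_weight_eq_of_moments (z : R) : node_weight q1 z = node_weight q2 z.
Proof.
  set (others := remove Req_EM_T z (map fst q1 ++ map fst q2)).
  assert (Hz : root_poly others z <> 0) by (apply root_poly_neq0, remove_In).
  assert (Hisolate : forall q,
    (forall p, In p q -> In (fst p) (map fst q1 ++ map fst q2)) ->
    qsum q (fun t => (1 + t) ^ 0 * root_poly others t)
      = node_weight q z * root_poly others z).
  { intros q Hq. rewrite (qsum_single_node q _ z).
    - simpl. ring.
    - intros p Hp Hpz. rewrite root_poly_eq0; [ring|].
      apply in_in_remove; [exact Hpz|]. apply Hq, Hp. }
  pose proof (qsum_shifted_pow_root_poly_eq others 0) as Heq.
  rewrite !Hisolate in Heq.
  - apply Rmult_eq_reg_r in Heq; assumption.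
  - intros p Hp. apply in_or_app; right. apply in_map, Hp.
  - intros p Hp. apply in_or_app; left. apply in_map, Hp.
Qed.

End EqualMoments.

Theorem corollary4p9 (n : nat) (T : nat -> Prop) :
  (2 <= n)%nat ->
  PULB_space n T ->
  forall q1 q2 : list (R * R),
    PULB_rule n T q1 -> PULB_rule n T q2 ->
    Permutation q1 q2.
Proof.
  intros _ _ q1 q2 Hq1 Hq2.
  pose proof Hq1 as [[Hnodup1 [Hrule1 _]] _].
  pose proof Hq2 as [[Hnodup2 [Hrule2 _]] _].
  assert (Hmoments : forall k,
    qsum q1 (fun t => (1 + t) ^ k) = qsum q2 (fun t => (1 + t) ^ k)).
  { intros k. apply Rle_antisym.
    - apply (qsum_le_of_interpolation n T);
        [exact Hq1 | apply Hq2 | apply shifted_pow_abs_monotone].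
    - apply (qsum_le_of_interpolation n T);
        [exact Hq2 | apply Hq1 | apply shifted_pow_abs_monotone]. }
  apply Permutation_of_node_weight_eq; try assumption.
  - intros p Hp. apply (Hrule1 p Hp).
  - intros p Hp. apply (Hrule2 p Hp).
  - apply node_weight_eq_of_moments, Hmoments.
Qed.
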